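(* Let $(F,+,\cdot)$ be a (left) near-field and $V$ a near-vector space over $F$. The following are equivalent: (1) $V$ is a multiplicative near-vector space; (2) for every $u\in Q(V)\setminus\{0\}$ there is a multiplicative automorphism $\sigma$ of $F$ with $+_u=+_\sigma$; (3) $V$ is $F$-isomorphic to $F^{\boldsymbol\theta,\boldsymbol{\mathrm{Id}}}$ for some family $\boldsymbol\theta$ of multiplicative automorphisms of $F$; (4) $V$ is $F$-isomorphic to $F^{\boldsymbol{\mathrm{Id}},\boldsymbol\theta}$ for some family $\boldsymbol\theta$ of multiplicative automorphisms of $F$.
   Context: A (left) near-field is $(F,+,\cdot,0,1)$ where $(F,\cdot,1)$ is a monoid, $(F\setminus\{0\},\cdot)$ is a group, $(F,+,0)$ is an abelian group, and $\alpha(\beta+\gamma)=\alpha\beta+\alpha\gamma$. A near-vector space over $F$ is an abelian group $V$ with a left action of $(F,\cdot)$ by group endomorphisms, with $0,1,-1$ acting as $0,\mathrm{id},-\mathrm{id}$, the action free, and the quasi-kernel $Q(V)=\{u:\forall\alpha,\beta\in F\ \exists\gamma\in F,\ \alpha u+\beta u=\gamma u\}$ generating $V$ additively. For $u\in Q(V)\setminus\{0\}$, $\alpha+_u\beta$ is the unique $\gamma$ with $\alpha u+\beta u=\gamma u$. A multiplicative automorphism is a monoid automorphism of $(F,\cdot)$; for such $\tau$, $\alpha+_\tau\beta=\tau^{-1}(\tau(\alpha)+\tau(\beta))$. For an index set $I$ and families $\boldsymbol\sigma=(\sigma_i)_{i\in I}$, $\boldsymbol\rho=(\rho_i)_{i\in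 I}$ of multiplicative automorphisms, $F^{\boldsymbol\sigma,\boldsymbol\rho}$ is the set of finitely supported $(\alpha_i)_{i\in I}\in F^I$ with addition $(\alpha_i)+_{\boldsymbol\sigma}(\beta_i)=(\alpha_i+_{\sigma_i}\beta_i)$ and scalar multiplication $\alpha\cdot_{\boldsymbol\rho}(\alpha_i)=(\rho_i(\alpha)\alpha_i)$; $\boldsymbol{\mathrm{Id}}$ is the family all of whose entries are the identity. An $F$-isomorphism is a bijective additive map $\phi$ with $\phi(\alpha v)=\alpha\phi(v)$. $V$ is multiplicative if it is $F$-isomorphic to $F^{\boldsymbol\sigma,\boldsymbol\rho}$ for some families $\boldsymbol\sigma,\boldsymbol\rho$ of multiplicative automorphisms. *)

From Stdlib Require Import List.
Set Implicit Arguments.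

Record NearField := {
  NF :> Type;
  nf_add : NF -> NF -> NF;
  nf_opp : NF -> NF;
  nf_zero : NF;
  nf_mul : NF -> NF -> NF;
  nf_one : NF;
  nf_addA : forall a b c, nf_add a (nf_add b c) = nf_add (nf_add a b) c;
  nf_addC : forall a b, nf_add a b = nf_add b a;
  nf_add0 : forall a, nf_add nf_zero a = a;
  nf_addN : forall a, nf_add (nf_opp a) a = nf_zero;
  nf_mulA : forall a b c, nf_mul a (nf_mul b c) = nf_mul (nf_mul a b) c;
  nf_mul1l : forall a, nf_mul nf_one a = a;
  nf_mul1r : forall a, nf_mul a nf_one = a;
  (* (F \ {0}, .) is a group (its identity is necessarily 1) *)
  nf_one_neq0 : nf_one <> nf_zero;
  nf_mul_neq0 : forall a b, a <> nf_zero -> b <> nf_zero -> nf_mul a b <> nf_zero;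
  nf_inv_ex : forall a, a <> nf_zero ->
      exists b, b <> nf_zero /\ nf_mul a b = nf_one /\ nf_mul b a = nf_one;
  nf_mulDr : forall a b c, nf_mul a (nf_add b c) = nf_add (nf_mul a b) (nf_mul a c)
}.

Inductive gen_subgroup (V : Type) (add : V -> V -> V) (opp : V -> V) (zero : V)
    (S : V -> Prop) : V -> Prop :=
  | gen_in : forall v, S v -> gen_subgroup add opp zero S v
  | gen_zero : gen_subgroup add opp zero S zero
  | gen_add : forall v w, gen_subgroup add opp zero S v ->
      gen_subgroup add opp zero S w -> gen_subgroup add opp zero S (add v w)
  | gen_opp : forall v, gen_subgroup add opp zero S v ->
      gen_subgroup add opp zero S (opp v).

Definition quasi_kernel (F : NearField) (V : Type) (addV : V -> V -> V)
  (act : F -> V -> V) (u : V) : Prop :=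
  forall a b : F, exists c : F, addV (act a u) (act b u) = act c u.

Record NearVectorSpace (F : NearField) := {
  NV :> Type;
  nv_add : NV -> NV -> NV;
  nv_opp : NV -> NV;
  nv_zero : NV;
  nv_act : F -> NV -> NV;
  nv_addA : forall u v w, nv_add u (nv_add v w) = nv_add (nv_add u v) w;
  nv_addC : forall u v, nv_add u v = nv_add v u;
  nv_add0 : forall u, nv_add nv_zero u = u;
  nv_addN : forall u, nv_add (nv_opp u) u = nv_zero;
  nv_act_mul : forall a b v, nv_act (nf_mul F a b) v = nv_act a (nv_act b v);
  nv_act1 : forall v, nv_act (nf_one F) v = v;
  nv_actD : forall a v w, nv_act a (nv_add v w) = nv_add (nv_act a v) (nv_act a w);
  nv_act0 : forall v, nv_act (nf_zero F) v = nv_zero;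
  nv_actN1 : forall v, nv_act (nf_opp F (nf_one F)) v = nv_opp v;
  nv_free : forall a b v, nv_act a v = nv_act b v -> v = nv_zero \/ a = b;
  nv_gen : forall v, gen_subgroup nv_add nv_opp nv_zero
                       (@quasi_kernel F NV nv_add nv_act) v
}.

Arguments nv_add {F} _ _ _.
Arguments nv_act {F} _ _ _.
Arguments nv_zero {F} _.

(** Multiplicative automorphism: monoid automorphism of (F,.,1),
    bundled with its (unique) inverse map. *)
Record multAut (F : NearField) := {
  ma_fun :> F -> F;
  ma_inv : F -> F;
  ma_invK : forall a, ma_inv (ma_fun a) = a;
  ma_funK : forall a, ma_fun (ma_inv a) = a;
  ma_mul : forall a b, ma_fun (nf_mul F a b) = nf_mul F (ma_fun a) (ma_fun b);
  ma_one : ma_fun (nf_one F) = nf_one F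
}.

Definition add_aut (F : NearField) (tau : multAut F) (a b : F) : F :=
  ma_inv tau (nf_add F (tau a) (tau b)).

Definition idMA (F : NearField) : multAut F :=
  @Build_multAut F (fun a => a) (fun a => a)
    (fun a => eq_refl) (fun a => eq_refl) (fun a b => eq_refl) eq_refl.

Definition fin_supp (F : NearField) (I : Type) (f : I -> F) : Prop :=
  exists s : list I, forall i, f i <> nf_zero F -> In i s.

(** V is F-isomorphic to F^{sigma,rho}: a bijection phi from V onto the
    finitely supported families (equality of families is pointwise),
    additive for +_sigma and compatible with .rho. *)
Definition F_iso_to (F : NearField) (V : NearVectorSpace F) (I : Type)
  (sigma rho : I -> multAut F) : Prop :=
  exists phi : V -> I -> F,
    (forall v, @fin_supp F I (phi v)) /\
    (forall f : I -> F, @fin_supp F I f -> exists v, forall i, phi v i = f i) /\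
    (forall v w, (forall i, phi v i = phi w i) -> v = w) /\
    (forall v w i, phi (nv_add V v w) i = add_aut (sigma i) (phi v i) (phi w i)) /\
    (forall (a : F) v i, phi (nv_act V a v) i = nf_mul F (rho i a) (phi v i)).

Definition multiplicative_nvs (F : NearField) (V : NearVectorSpace F) : Prop :=
  exists (I : Type) (sigma rho : I -> multAut F), @F_iso_to F V I sigma rho.

From Stdlib Require Import List Classical ClassicalEpsilon ProofIrrelevance.
From mathcomp Require classical_sets.

Set Implicit Arguments.

(* Zorn's lemma gives a maximal independent set of quasi-kernel vectors; it spans V and
   every vector has unique coordinates along it, so V is identified with the finitely
   supported families.  If each basis vector [u] satisfies [+_u = +_sigma], coordinates
   add through [+_sigma], which is (2) => (3).  Conversely, in [F^{Id,theta}] a nonzero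
   [u] of the quasi-kernel has a nonzero coordinate [w], and [+_u = +_sigma] for the
   conjugate [sigma x = w^-1 theta(x) w], which is (4) => (2).  Finally
   [F^{sigma,rho}] is isomorphic to [F^{sigma o tau, tau^-1 o rho}] for any family
   [tau], linking (1) with (3) ([tau = rho]) and (4) ([tau = sigma^-1]). *)

Section NearFieldFacts.
Variable F : NearField.
Local Notation "0" := (nf_zero F).
Local Notation "1" := (nf_one F).
Local Notation "a + b" := (nf_add F a b).
Local Notation "a * b" := (nf_mul F a b).

Lemma nf_addr0 a : a + 0 = a.
Proof. rewrite nf_addC; apply nf_add0. Qed.

Lemma nf_addI a b c : a + b = a + c -> b = c.
Proof.
  intro H. rewrite <- (nf_add0 F b), <- (nf_add0 F c), <- (nf_addN F a).
  rewrite <- !nf_addA, H. reflexivity.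
Qed.

Lemma nf_add_idem a : a + a = a -> a = 0.
Proof. intro H. apply (nf_addI a). rewrite nf_addr0. exact H. Qed.

Lemma nf_mulr0 a : a * 0 = 0.
Proof. apply nf_add_idem. rewrite <- nf_mulDr, nf_add0. reflexivity. Qed.

(* Only left distributivity is available, so [0 * a = 0] needs the inverse of [a]. *)
Lemma nf_mul0r a : 0 * a = 0.
Proof.
  destruct (classic (a = 0)) as [->|Ha]; [apply nf_mulr0|].
  destruct (nf_inv_ex F Ha) as [b [Hb [Hab _]]].
  apply NNPP. intro Hz. apply (nf_mul_neq0 F Hz Hb).
  rewrite <- nf_mulA, Hab. apply nf_mul1r.
Qed.

Lemma ma_fun0 (s : multAut F) : s 0 = 0.
Proof.
  rewrite <- (nf_mul0r (ma_inv s 0)) at 1. rewrite ma_mul, ma_funK. apply nf_mulr0.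
Qed.

Lemma ma_inv0 (s : multAut F) : ma_inv s 0 = 0.
Proof. rewrite <- (ma_fun0 s) at 1. apply ma_invK. Qed.

Lemma ma_invM (s : multAut F) a b : ma_inv s (a * b) = ma_inv s a * ma_inv s b.
Proof.
  rewrite <- (ma_funK s a) at 1. rewrite <- (ma_funK s b) at 1.
  rewrite <- ma_mul. apply ma_invK.
Qed.

Lemma ma_inv1 (s : multAut F) : ma_inv s 1 = 1.
Proof. rewrite <- (ma_one s) at 1. apply ma_invK. Qed.

Lemma ma_inv_ext (s t : multAut F) : (forall a, s a = t a) -> forall a, ma_inv s a = ma_inv t a.
Proof.
  intros E a. rewrite <- (ma_funK t a) at 1. rewrite <- E. apply ma_invK.
Qed.

Lemma add_autE (s : multAut F) a b c : s a + s b = s c -> add_aut s a b = c.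
Proof. intro E. unfold add_aut. rewrite E. apply ma_invK. Qed.

Lemma add_aut0r (s : multAut F) a : add_aut s a 0 = a.
Proof. apply add_autE. rewrite ma_fun0. apply nf_addr0. Qed.

Lemma add_aut0l (s : multAut F) a : add_aut s 0 a = a.
Proof. apply add_autE. rewrite ma_fun0. apply nf_add0. Qed.

Definition compMA (s t : multAut F) : multAut F.
Proof.
  refine (@Build_multAut F (fun a => s (t a)) (fun a => ma_inv t (ma_inv s a)) _ _ _ _).
  - intro a. rewrite !ma_invK. reflexivity.
  - intro a. rewrite !ma_funK. reflexivity.
  - intros a b. rewrite !ma_mul. reflexivity.
  - rewrite !ma_one. reflexivity.
Defined.

Definition invMA (s : multAut F) : multAut F :=
  @Build_multAut F (ma_inv s) s (ma_funK s) (ma_invK s) (ma_invM s) (ma_inv1 s).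

Definition conjMA (t : multAut F) (w w' : F) (H1 : w * w' = 1) (H2 : w' * w = 1) :
  multAut F.
Proof.
  refine (@Build_multAut F (fun x => w' * (t x * w)) (fun y => ma_inv t (w * (y * w'))) _ _ _ _).
  - intro a. rewrite !nf_mulA, H1, nf_mul1l, <- nf_mulA, H1, nf_mul1r. apply ma_invK.
  - intro a. rewrite ma_funK, !nf_mulA, H2, nf_mul1l, <- nf_mulA, H2, nf_mul1r.
    reflexivity.
  - intros a b. rewrite ma_mul, !nf_mulA. f_equal. rewrite <- !nf_mulA.
    rewrite (nf_mulA _ w w'), H1, nf_mul1l. reflexivity.
  - rewrite ma_one, nf_mul1l. exact H2.
Defined.

End NearFieldFacts.

Arguments compMA {F}.
Arguments invMA {F}.
Arguments conjMA {F}.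

Section Twist.
Variables (F : NearField) (V : NearVectorSpace F) (I : Type).

Lemma F_iso_to_ext (s s' r r' : I -> multAut F) : F_iso_to V s r ->
  (forall i a, s i a = s' i a) -> (forall i a, r i a = r' i a) -> F_iso_to V s' r'.
Proof.
  intros [phi [Hfs [Hsur [Hinj [Hadd Hact]]]]] Es Er.
  exists phi. repeat split; auto.
  - intros v w i. rewrite Hadd. unfold add_aut. rewrite !Es. apply ma_inv_ext, Es.
  - intros a v i. rewrite Hact, Er. reflexivity.
Qed.

Lemma F_iso_to_twist (s r t : I -> multAut F) :
  F_iso_to V s r ->
  F_iso_to V (fun i => compMA (s i) (t i)) (fun i => compMA (invMA (t i)) (r i)).
Proof.
  intros [phi [Hfs [Hsur [Hinj [Hadd Hact]]]]].
  exists (fun v i => ma_inv (t i) (phi v i)). repeat split.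
  - intro v. destruct (Hfs v) as [l Hl]. exists l. intros i Hi. apply Hl.
    intro E. apply Hi. rewrite E. apply ma_inv0.
  - intros f [l Hl]. destruct (Hsur (fun i => t i (f i))) as [v Hv].
    + exists l. intros i Hi. apply Hl. intro E. apply Hi. rewrite E. apply ma_fun0.
    + exists v. intro i. rewrite Hv. apply ma_invK.
  - intros v w E. apply Hinj. intro i.
    rewrite <- (ma_funK (t i) (phi v i)), <- (ma_funK (t i) (phi w i)), E. reflexivity.
  - intros v w i. rewrite Hadd. unfold add_aut. simpl. rewrite !ma_funK. reflexivity.
  - intros a v i. rewrite Hact. simpl. apply ma_invM.
Qed.

End Twist.

Arguments F_iso_to_ext {F V I s s' r r'} _ _ _.

Section NearVectorSpaceFacts.
Variables (F : NearField) (V : NearVectorSpace F).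
Local Notation "0" := (nv_zero V).
Local Notation "a + b" := (nv_add V a b).
Local Notation "- a" := (nv_opp V a).
Local Notation "a *: v" := (nv_act V a v) (at level 40).

Lemma vaddr0 u : u + 0 = u.
Proof. rewrite nv_addC; apply nv_add0. Qed.

Lemma vaddrN u : u + - u = 0.
Proof. rewrite nv_addC; apply nv_addN. Qed.

Lemma vaddI a b c : a + b = a + c -> b = c.
Proof.
  intro H. rewrite <- (nv_add0 V b), <- (nv_add0 V c), <- (nv_addN V a).
  rewrite <- !nv_addA, H. reflexivity.
Qed.

Lemma voppE u w : u + w = 0 -> - u = w.
Proof. intro H. apply (vaddI u). rewrite vaddrN, H. reflexivity. Qed.

Lemma voppK u : - - u = u.
Proof. apply voppE, nv_addN. Qed.

Lemma vopp0 : - 0 = 0.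
Proof. apply voppE, nv_add0. Qed.

Lemma vaddACA a b c d : (a + b) + (c + d) = (a + c) + (b + d).
Proof. rewrite <- !nv_addA. f_equal. rewrite !nv_addA. f_equal. apply nv_addC. Qed.

Lemma voppD u w : - (u + w) = - u + - w.
Proof. apply voppE. rewrite vaddACA, !vaddrN. apply nv_add0. Qed.

Lemma vsubD u w a b : (u + w) + - (a + b) = (u + - a) + (w + - b).
Proof. rewrite voppD. apply vaddACA. Qed.

Lemma vaddrK u w : (u + w) + - w = u.
Proof. rewrite <- nv_addA, vaddrN. apply vaddr0. Qed.

Lemma vsubr0 u : u + - 0 = u.
Proof. rewrite vopp0. apply vaddr0. Qed.

Lemma vsub_eq0 u w : u + - w = 0 -> u = w.
Proof. intro H. rewrite <- (vaddr0 u), <- (nv_addN V w), nv_addA, H. apply nv_add0. Qed.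

Lemma vsub2l u a b : (u + - a) + - (u + - b) = b + - a.
Proof. rewrite vsubD, vaddrN, nv_add0, voppK. apply nv_addC. Qed.

Lemma vsub2r u w a : (u + - a) + - (w + - a) = u + - w.
Proof. rewrite vsubD, voppK, nv_addN. apply vaddr0. Qed.

Lemma vact0 a : a *: 0 = 0.
Proof. apply (vaddI (a *: 0)). rewrite vaddr0, <- nv_actD, nv_add0. reflexivity. Qed.

Lemma vactN a u : a *: - u = - (a *: u).
Proof. symmetry. apply voppE. rewrite <- nv_actD, vaddrN. apply vact0. Qed.

Lemma vactB a u w : a *: (u + - w) = a *: u + - (a *: w).
Proof. rewrite nv_actD, vactN. reflexivity. Qed.

End NearVectorSpaceFacts.

Arguments vaddrK {F V} u w.
Arguments vsub2l {F V} u a b.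
Arguments vsub2r {F V} u w a.

Lemma qker_add_aut_of_F_iso (F : NearField) (V : NearVectorSpace F) (I : Type)
    (theta : I -> multAut F) :
  F_iso_to V (fun _ => idMA F) theta ->
  forall u : V, @quasi_kernel F V (nv_add V) (nv_act V) u -> u <> nv_zero V ->
  exists sigma : multAut F, forall a b : F,
    nv_add V (nv_act V a u) (nv_act V b u) = nv_act V (add_aut sigma a b) u.
Proof.
  intros [psi [_ [_ [Hinj [Hadd Hact]]]]] u Hq Hu.
  assert (Hpsi0 : forall i, psi (nv_zero V) i = nf_zero F).
  { intro i. apply nf_add_idem. symmetry.
    pose proof (Hadd (nv_zero V) (nv_zero V) i) as E. rewrite nv_add0 in E. exact E. }
  destruct (classic (exists j, psi u j <> nf_zero F)) as [[j Hj]|Hn].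
  2:{ exfalso. apply Hu, Hinj. intro i. rewrite Hpsi0.
      apply NNPP. intro. apply Hn. eauto. }
  destruct (nf_inv_ex F Hj) as [w' [_ [H1 H2]]].
  exists (conjMA (theta j) (psi u j) w' H1 H2). intros a b.
  destruct (Hq a b) as [c Hc]. rewrite Hc. f_equal. symmetry. apply add_autE. simpl.
  rewrite <- nf_mulDr, <- !Hact, <- Hc, Hadd. reflexivity.
Qed.

Section Span.
Variables (F : NearField) (V : NearVectorSpace F).
Local Notation "0" := (nv_zero V).
Local Notation "a + b" := (nv_add V a b).
Local Notation "- a" := (nv_opp V a).
Local Notation "a *: v" := (nv_act V a v) (at level 40).

Definition qker (u : V) : Prop := @quasi_kernel F V (nv_add V) (nv_act V) u.

Definition span (S : V -> Prop) : V -> Prop :=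
  gen_subgroup (nv_add V) (nv_opp V) 0 (fun v => exists c x, S c /\ v = x *: c).

Lemma span_scale (S : V -> Prop) c x : S c -> span S (x *: c).
Proof. intro Hc. apply gen_in. exists c, x. auto. Qed.

Lemma span_mem (S : V -> Prop) c : S c -> span S c.
Proof. intro Hc. rewrite <- (nv_act1 V c). apply span_scale, Hc. Qed.

Lemma span_sub (S : V -> Prop) v w : span S v -> span S w -> span S (v + - w).
Proof. intros. apply gen_add; [|apply gen_opp]; assumption. Qed.

Lemma span_mono (S S' : V -> Prop) : (forall c, S c -> S' c) -> forall v, span S v -> span S' v.
Proof.
  intros HS v Hv. induction Hv as [v [c [x [Hc ->]]]| |v w _ IH1 _ IH2|v _ IH].
  - apply span_scale, HS, Hc.
  - apply gen_zero.
  - apply gen_add; assumption.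
  - apply gen_opp; assumption.
Qed.

Lemma span_act (S : V -> Prop) a v : span S v -> span S (a *: v).
Proof.
  intro Hv. induction Hv as [v [c [x [Hc ->]]]| |v w _ IH1 _ IH2|v _ IH].
  - rewrite <- nv_act_mul. apply span_scale, Hc.
  - rewrite vact0. apply gen_zero.
  - rewrite nv_actD. apply gen_add; assumption.
  - rewrite vactN. apply gen_opp; assumption.
Qed.

(* The quasi-kernel condition says exactly that [F u] is an additive subgroup. *)
Lemma span_insert (S : V -> Prop) u : qker u ->
  forall v, span (fun c => c = u \/ S c) v -> exists x w, span S w /\ v = x *: u + w.
Proof.
  intros Hq v Hv.
  induction Hv as [v [c [x [[->|Hc] ->]]]| |v w _ [x1 [w1 [Hw1 ->]]] _ [x2 [w2 [Hw2 ->]]]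
                  |v _ [x [w [Hw ->]]]].
  - exists x, 0. split; [apply gen_zero|symmetry; apply vaddr0].
  - exists (nf_zero F), (x *: c). split; [apply span_scale, Hc|].
    rewrite nv_act0, nv_add0. reflexivity.
  - exists (nf_zero F), 0. split; [apply gen_zero|]. rewrite nv_act0, nv_add0. reflexivity.
  - destruct (Hq x1 x2) as [x Hx]. exists x, (w1 + w2). split; [apply gen_add; assumption|].
    rewrite <- Hx. apply vaddACA.
  - exists (nf_mul F (nf_opp F (nf_one F)) x), (- w). split; [apply gen_opp, Hw|].
    rewrite voppD, nv_act_mul, nv_actN1. reflexivity.
Qed.

Lemma span_scale_notin (S : V -> Prop) u y : ~ span S u -> span S (y *: u) -> y = nf_zero F.
Proof.
  intros Hn Hs. apply NNPP. intro Hy. apply Hn.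
  destruct (nf_inv_ex F Hy) as [z [_ [_ Hzy]]].
  rewrite <- (nv_act1 V u), <- Hzy, nv_act_mul. apply span_act, Hs.
Qed.

Definition family_span (I : Type) (e : I -> V) (P : I -> Prop) : V -> Prop :=
  span (fun c => exists i, P i /\ e i = c).

Lemma family_span_finite (I : Type) (e : I -> V) v :
  family_span e (fun _ => True) v -> exists s : list I, family_span e (fun i => In i s) v.
Proof.
  intro Hv. induction Hv as [v [c [x [[i [_ <-]] ->]]]| |v w _ [s1 H1] _ [s2 H2]|v _ [s H]].
  - exists (i :: nil). apply span_scale. exists i. split; [left|]; reflexivity.
  - exists nil. apply gen_zero.
  - exists (s1 ++ s2). apply gen_add.
    + revert H1. apply span_mono. intros c [j [Hj <-]]. exists j. auto using in_or_app.
    + revert H2. apply span_mono. intros c [j [Hj <-]]. exists j. auto using in_or_app.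
  - exists s. apply gen_opp, H.
Qed.

End Span.

Arguments qker {F V} u.
Arguments span {F V} S _.
Arguments family_span {F V I} e P _.
Arguments span_insert {F V S u} _ {v} _.
Arguments span_scale_notin {F V S u y} _ _.

Section MaximalIndependent.
Variables (F : NearField) (V : NearVectorSpace F).
Local Notation "a *: v" := (nv_act V a v) (at level 40).

Definition qk_independent (A : V -> Prop) : Prop :=
  (forall c, A c -> qker c) /\ (forall b, A b -> ~ span (fun c => A c /\ c <> b) b).

Section Chain.
Variable Fm : (V -> Prop) -> Prop.
Hypothesis Fm_total : forall X Y, Fm X -> Fm Y ->
  (forall t, X t -> Y t) \/ (forall t, Y t -> X t).

(* A span uses finitely many vectors, which all lie in one member of the chain. *)
Lemma chain_span_member b X0 : Fm X0 -> forall v,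
  span (fun c => (exists2 X, Fm X & X c) /\ c <> b) v ->
  exists X, Fm X /\ (forall t, X0 t -> X t) /\ span (fun c => X c /\ c <> b) v.
Proof.
  intros HX0 v Hv.
  induction Hv as [v [c [x [[[Y FY Yc] cb] ->]]]| |v w _ [X1 [F1 [S1 H1]]] _ [X2 [F2 [S2 H2]]]
                  |v _ [X [FX [SX HX]]]].
  - destruct (Fm_total HX0 FY) as [HXY|HYX].
    + exists Y. repeat split; auto. apply span_scale. auto.
    + exists X0. repeat split; auto. apply span_scale. auto.
  - exists X0. repeat split; auto. apply gen_zero.
  - destruct (Fm_total F1 F2) as [H12|H21].
    + exists X2. repeat split; auto. apply gen_add; auto.
      revert H1. apply span_mono. intros c [? ?]; auto.
    + exists X1. repeat split; auto. apply gen_add; auto.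
      revert H2. apply span_mono. intros c [? ?]; auto.
  - exists X. repeat split; auto. apply gen_opp, HX.
Qed.

Lemma qk_independent_chain_union : (forall X, Fm X -> qk_independent X) ->
  qk_independent (fun t => exists2 X, Fm X & X t).
Proof.
  intros HFm. split.
  - intros c [X FX Xc]. apply (proj1 (HFm X FX)), Xc.
  - intros b [X FX Xb] Hs. destruct (chain_span_member FX Hs) as [Y [FY [XY HY]]].
    apply (proj2 (HFm Y FY) b); auto.
Qed.

End Chain.

Lemma exists_maximal_qk_independent : exists A, qk_independent A /\
  forall B, (forall t, A t -> B t) -> qk_independent B -> forall t, B t -> A t.
Proof.
  destruct (@classical_sets.Zorn_bigcup V qk_independent) as [A [HA Amax]].
  - intros Fm HFm Htot. apply qk_independent_chain_union; assumption.
  - exists A. split; [exact HA|]. intros B AB HB t Bt. apply NNPP. intro nAt.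
    apply (Amax B); [split; [exact AB|] | exact HB]. intro BA. exact (nAt (BA t Bt)).
Qed.

Section Maximal.
Variable A : V -> Prop.
Hypothesis A_indep : qk_independent A.
Hypothesis A_max : forall B, (forall t, A t -> B t) -> qk_independent B -> forall t, B t -> A t.

Lemma maximal_span_qker u : qker u -> span A u.
Proof.
  intro Hq. apply NNPP. intro Hn.
  assert (Hu : qk_independent (fun c => c = u \/ A c)).
  { split.
    - intros c [->|Hc]; [exact Hq|]. apply (proj1 A_indep), Hc.
    - intros b [->|Hb] Hs.
      + apply Hn. revert Hs. apply span_mono. intros c [[->|Hc] Hcu]; [congruence|exact Hc].
      + assert (Hs' : span (fun c => c = u \/ (A c /\ c <> b)) b)
          by (revert Hs; apply span_mono; intros c [[->|Hc] Hcb]; auto).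
        destruct (span_insert Hq Hs') as [y [w [Hw Hb_eq]]].
        assert (Hy : y = nf_zero F).
        { apply (span_scale_notin Hn). rewrite <- (vaddrK (y *: u) w), <- Hb_eq.
          apply span_sub; [apply span_mem, Hb|].
          revert Hw. apply span_mono. intros c [? ?]; assumption. }
        subst y. rewrite nv_act0, nv_add0 in Hb_eq. subst w.
        exact (proj2 A_indep b Hb Hw). }
  apply Hn, span_mem, (A_max (B := fun c => c = u \/ A c)); auto.
Qed.

Lemma maximal_span_all v : span A v.
Proof.
  induction (nv_gen V v) as [v Hv| |v w _ IH1 _ IH2|v _ IH].
  - apply maximal_span_qker, Hv.
  - apply gen_zero.
  - apply gen_add; assumption.
  - apply gen_opp; assumption.
Qed.

End Maximal.

Definition qk_basis (I : Type) (e : I -> V) : Prop :=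
  (forall i, qker (e i)) /\
  (forall i, ~ family_span e (fun k => k <> i) (e i)) /\
  (forall v, family_span e (fun _ => True) v).

Lemma exists_qk_basis : exists (I : Type) (e : I -> V), qk_basis e.
Proof.
  destruct exists_maximal_qk_independent as [A [HA Amax]].
  exists {c | A c}, (@proj1_sig V A). repeat split.
  - intros [c Hc]. apply (proj1 HA), Hc.
  - intros [b Hb] Hs. apply (proj2 HA b Hb). revert Hs. apply span_mono.
    intros c [[k Hk] [Hki <-]]. split; [exact Hk|]. intro E. apply Hki.
    simpl in E. subst k. f_equal. apply proof_irrelevance.
  - intro v. generalize (maximal_span_all HA Amax v). apply span_mono.
    intros c Hc. exists (exist A c Hc). auto.
Qed.

End MaximalIndependent.

Section Coordinates.
Variables (F : NearField) (V : NearVectorSpace F) (I : Type) (e : I -> V).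
Local Notation "0" := (nv_zero V).
Local Notation "a + b" := (nv_add V a b).
Local Notation "- a" := (nv_opp V a).
Local Notation "a *: v" := (nv_act V a v) (at level 40).
Local Notation others i := (family_span e (fun k => k <> i)).

Hypothesis e_qker : forall i, qker (e i).
Hypothesis e_indep : forall i, ~ others i (e i).
Hypothesis e_span : forall v, family_span e (fun _ => True) v.

Lemma basis_neq0 i : e i <> 0.
Proof. intro E. apply (@e_indep i). rewrite E. apply gen_zero. Qed.

Lemma coord_ex v i : exists x, others i (v + - (x *: e i)).
Proof.
  assert (Hv : span (fun c => c = e i \/ exists k, k <> i /\ e k = c) v).
  { generalize (e_span v). apply span_mono. intros c [k [_ <-]].
    destruct (classic (k = i)) as [->|Hki]; [left|right; exists k]; auto. }
  destruct (span_insert (e_qker i) Hv) as [x [w [Hw ->]]].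
  exists x. rewrite (nv_addC V (x *: e i) w), vaddrK. exact Hw.
Qed.

Lemma coord_uniq v i x y :
  others i (v + - (x *: e i)) -> others i (v + - (y *: e i)) -> x = y.
Proof.
  intros Hx Hy. destruct (e_qker i x (nf_mul F (nf_opp F (nf_one F)) y)) as [c Hc].
  rewrite nv_act_mul, nv_actN1 in Hc.
  assert (Hc0 : c = nf_zero F).
  { apply (span_scale_notin (@e_indep i)). rewrite <- Hc, <- (vsub2l v).
    apply span_sub; assumption. }
  rewrite Hc0, nv_act0 in Hc. apply vsub_eq0 in Hc.
  destruct (nv_free V x y (e i) Hc) as [E|E]; [destruct (basis_neq0 E)|exact E].
Qed.

Definition coord (v : V) (i : I) : F :=
  proj1_sig (constructive_indefinite_description _ (coord_ex v i)).

Lemma coord_spec v i : others i (v + - (coord v i *: e i)).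
Proof. unfold coord. destruct (constructive_indefinite_description _ _) as [x Hx]. exact Hx. Qed.

Lemma coordE v i x : others i (v + - (x *: e i)) -> coord v i = x.
Proof. apply coord_uniq, coord_spec. Qed.

Lemma coord_eq0 v i : others i v -> coord v i = nf_zero F.
Proof. intro Hv. apply coordE. rewrite nv_act0, vsubr0. exact Hv. Qed.

Lemma coord_scale_id x i : coord (x *: e i) i = x.
Proof. apply coordE. rewrite vaddrN. apply gen_zero. Qed.

Lemma coord_scale_neq x i j : j <> i -> coord (x *: e j) i = nf_zero F.
Proof. intro Hji. apply coord_eq0, span_scale. exists j. auto. Qed.

Lemma coord_act a v i : coord (a *: v) i = nf_mul F a (coord v i).
Proof. apply coordE. rewrite nv_act_mul, <- vactB. apply span_act, coord_spec. Qed.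

Lemma coord_sub_eq0 v w i : coord v i = coord w i -> coord (v + - w) i = nf_zero F.
Proof.
  intro E. apply coord_eq0. rewrite <- (vsub2r v w (coord v i *: e i)).
  apply span_sub; [|rewrite E]; apply coord_spec.
Qed.

Lemma coord_support v : @fin_supp F I (coord v).
Proof.
  destruct (family_span_finite (e_span v)) as [s Hs]. exists s. intros i Hi.
  apply NNPP. intro Hni. apply Hi, coord_eq0. revert Hs. apply span_mono.
  intros c [k [Hk <-]]. exists k. split; [intros ->; contradiction|reflexivity].
Qed.

Lemma eq0_of_coord0_finite (s : list I) : forall d, family_span e (fun i => In i s) d ->
  (forall i, coord d i = nf_zero F) -> d = 0.
Proof.
  induction s as [|j s IH]; intros d Hd Hcoord.
  - clear Hcoord. induction Hd as [v [c [x [[k [[] _]] _]]]| |v w _ IH1 _ IH2|v _ IHv].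
    + reflexivity.
    + rewrite IH1, IH2. apply nv_add0.
    + rewrite IHv. apply vopp0.
  - assert (Hd' : span (fun c => c = e j \/ exists k, (In k s /\ k <> j) /\ e k = c) d).
    { revert Hd. apply span_mono. intros c [k [[<-|Hk] <-]]; [left; reflexivity|].
      destruct (classic (k = j)) as [->|Hkj]; [left|right; exists k]; auto. }
    destruct (span_insert (e_qker j) Hd') as [x [w [Hw ->]]].
    assert (Hx : x = nf_zero F).
    { rewrite <- (Hcoord j). symmetry. apply coordE. rewrite (nv_addC V (x *: e j) w), vaddrK.
      revert Hw. apply span_mono. intros c [k [[_ Hkj] <-]]. exists k. auto. }
    rewrite Hx, nv_act0, nv_add0 in *. apply IH; [|exact Hcoord].
    revert Hw. apply span_mono. intros c [k [[Hk _] <-]]. exists k. auto.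
Qed.

Lemma coord_inj v w : (forall i, coord v i = coord w i) -> v = w.
Proof.
  intro E. apply vsub_eq0. destruct (family_span_finite (e_span (v + - w))) as [s Hs].
  apply (eq0_of_coord0_finite s Hs). intro i. apply coord_sub_eq0, E.
Qed.

Variable sigma : I -> multAut F.
Hypothesis e_add_aut : forall i a b, a *: e i + b *: e i = add_aut (sigma i) a b *: e i.

Lemma coord_add v w i : coord (v + w) i = add_aut (sigma i) (coord v i) (coord w i).
Proof. apply coordE. rewrite <- e_add_aut, vsubD. apply gen_add; apply coord_spec. Qed.

Lemma coord_surj (f : I -> F) : @fin_supp F I f -> exists v, forall i, coord v i = f i.
Proof.
  intros [s Hs]. revert f Hs. induction s as [|j s IH]; intros f Hs.
  - exists 0. intro i. rewrite coord_eq0 by apply gen_zero.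
    symmetry. apply NNPP. intro Hfi. exact (Hs i Hfi).
  - set (f' i := if excluded_middle_informative (i = j) then nf_zero F else f i).
    destruct (IH f') as [v' Hv'].
    { intros i Hi. unfold f' in Hi. destruct (excluded_middle_informative (i = j)) as [_|Hij].
      - contradiction.
      - destruct (Hs i Hi) as [E|]; [congruence|assumption]. }
    exists (v' + f j *: e j). intro i. rewrite coord_add, Hv'. unfold f'.
    destruct (excluded_middle_informative (i = j)) as [->|Hij].
    + rewrite coord_scale_id. apply add_aut0l.
    + rewrite coord_scale_neq by auto. apply add_aut0r.
Qed.

Lemma coord_F_iso : F_iso_to V sigma (fun _ => idMA F).
Proof.
  exists coord. repeat split.
  - apply coord_support.
  - apply coord_surj.
  - apply coord_inj.
  - apply coord_add.
  - apply coord_act.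
Qed.

End Coordinates.

Lemma F_iso_Id_of_qker_add_aut (F : NearField) (V : NearVectorSpace F) :
  (forall u : V, qker u -> u <> nv_zero V ->
   exists sigma : multAut F, forall a b : F,
     nv_add V (nv_act V a u) (nv_act V b u) = nv_act V (add_aut sigma a b) u) ->
  exists (I : Type) (theta : I -> multAut F), F_iso_to V theta (fun _ => idMA F).
Proof.
  intro Hsigma. destruct (exists_qk_basis V) as [I [e [e_qker [e_indep e_span]]]].
  destruct (choice (fun i (sigma : multAut F) => forall a b,
      nv_add V (nv_act V a (e i)) (nv_act V b (e i)) = nv_act V (add_aut sigma a b) (e i)))
    as [sigma Hs].
  { intro i. apply Hsigma; [apply e_qker|exact (basis_neq0 e_indep i)]. }
  exists I, sigma. exact (coord_F_iso e_qker e_indep e_span sigma Hs).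
Qed.

Theorem theorem3p16 (F : NearField) (V : NearVectorSpace F) :
  let P1 := multiplicative_nvs V in
  let P2 := forall u : V,
      @quasi_kernel F V (nv_add V) (nv_act V) u -> u <> nv_zero V ->
      exists sigma : multAut F,
        forall a b : F,
          nv_add V (nv_act V a u) (nv_act V b u) = nv_act V (add_aut sigma a b) u in
  let P3 := exists (I : Type) (theta : I -> multAut F),
      @F_iso_to F V I theta (fun _ => idMA F) in
  let P4 := exists (I : Type) (theta : I -> multAut F),
      @F_iso_to F V I (fun _ => idMA F) theta in
  (P1 <-> P2) /\ (P1 <-> P3) /\ (P1 <-> P4).
Proof.
  intros P1 P2 P3 P4.
  assert (P1_P3 : P1 -> P3).
  { intros [I [s [r H]]]. exists I, (fun i => compMA (s i) (r i)).
    apply (F_iso_to_ext (F_iso_to_twist r H)); intros i a; simpl; [reflexivity|apply ma_invK]. }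
  assert (P1_P4 : P1 -> P4).
  { intros [I [s [r H]]]. exists I, (fun i => compMA (s i) (r i)).
    apply (F_iso_to_ext (F_iso_to_twist (fun i => invMA (s i)) H)); intros i a; simpl;
      [apply ma_funK|reflexivity]. }
  assert (P3_P1 : P3 -> P1) by (intros [I [t H]]; exists I, t, (fun _ => idMA F); exact H).
  assert (P4_P1 : P4 -> P1) by (intros [I [t H]]; exists I, (fun _ => idMA F), t; exact H).
  assert (P4_P2 : P4 -> P2) by (intros [I [t H]]; exact (qker_add_aut_of_F_iso H)).
  assert (P2_P3 : P2 -> P3) by apply F_iso_Id_of_qker_add_aut.
  tauto.
Qed.
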